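(* Let $r=2$ and let $U$ be an $\mathbb{F}_q$-subspace of $\mathbb{F}_{q^n}^2$ with $\dim_{\mathbb{F}_q}U=n$, with determinantal polynomial $F_U(x,y)$. Then the number of zeros of $F_U$ in $\mathrm{PG}(1,q^n)$, counted with multiplicity, equals $\deg F_U=1+q+\dots+q^{n-1}$; i.e. all roots of $F_U$ lie in $\mathrm{PG}(1,q^n)$ ($F_U$ is a product of linear forms over $\mathbb{F}_{q^n}$).
   Context: $q$ a prime power, $n\ge2$. For an $\mathbb{F}_q$-subspace $U$ of $\mathbb{F}_{q^n}^2$, $L_U=\{\langle u\rangle_{\mathbb{F}_{q^n}}:u\in U\setminus\{0\}\}$. Determinantal polynomial: for $u=(u_0,u_1)$ let $\hat u=(u_0,u_1,u_0^q,u_1^q,\dots,u_0^{q^{n-1}},u_1^{q^{n-1}})\in\mathbb{F}_{q^n}^{2n}$; with an $\mathbb{F}_q$-basis $u_1,\dots,u_n$ of $U$, $F_U(x,y)$ is the determinant of the $2n\times 2n$ matrix whose first $n$ rows are $\hat u_1,\dots,\hat u_n$ and whose remaining rows are, for $i=0,\dots,n-1$, the vector with $x^{q^i},y^{q^i}$ in positions $2i,2i+1$ and zeros elsewhere. Its zeros in $\mathrm{PG}(1,q^n)$ are the points of $L_U$. *)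

From HB Require Import structures.
From mathcomp Require Import all_boot all_order all_algebra all_field.
From mathcomp Require Import mpoly.
Set Implicit Arguments. Unset Strict Implicit. Unset Printing Implicit Defensive.
Import GRing.Theory.
Local Open Scope ring_scope.

(* Bivariate polynomials in x = 'X_0 and y = 'X_1 over L. *)

(* The determinantal polynomial F_U(x,y) attached to the F_q-basis
   u_0,...,u_{n-1} of U (u k = (u_0, u_1) in L^2).  The 2n x 2n matrix has
   rows 0..n-1 equal to hat(u_k) = (u0, u1, u0^q, u1^q, ..., u0^{q^{n-1}}, u1^{q^{n-1}})
   and row n+i equal to the vector with x^{q^i}, y^{q^i} in columns 2i, 2i+1. *)
Definition detpoly (L : fieldType) (q n : nat) (u : 'I_n -> L * L)
  : {mpoly L[2]} :=
  \det (\matrix_(r < n + n, c < n + n)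
    (let i := (c %/ 2)%N in
     let e := (c %% 2)%N in
     match split r with
     | inl k => ((if e == 0%N then (u k).1 else (u k).2) ^+ (q ^ i))%:MP
     | inr k => if i == val k then ('X_(inord e) : {mpoly L[2]}) ^+ (q ^ i) else 0
     end)).

(* u_0,...,u_{n-1} are linearly independent over F_q = {c in L | c^q = c}. *)
Definition Fq_independent (L : fieldType) (q n : nat) (u : 'I_n -> L * L) :=
  forall c : 'I_n -> L, (forall i, c i ^+ q = c i) ->
    \sum_(i < n) c i * (u i).1 = 0 -> \sum_(i < n) c i * (u i).2 = 0 ->
    forall i, c i = 0.

From HB Require Import structures.
From mathcomp Require Import all_boot all_order all_algebra all_field.
From mathcomp Require Import mpoly.
From mathcomp Require Import ring zify perm.
Import GRing.Theory.
Local Open Scope ring_scope.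
Set Implicit Arguments. Unset Strict Implicit. Unset Printing Implicit Defensive.

(* Interleaving its columns turns the matrix of F_U into a block matrix
   [A B; X Y] whose lower blocks are the diagonal matrices of the x^{q^i} and
   y^{q^i}.  As X and Y commute, F_U = +-det (A Y - B X) = +-det (l_j^{q^i}), the
   Moore determinant of the linear forms l_j = u_{j,0} y - u_{j,1} x.
   Subtracting from each row of a Moore matrix g_0^{(q-1)q^{i-1}} times the
   previous row and expanding along the first column gives
   Moore(g) = g_0 Moore(g_j^q - g_0^{q-1} g_j), and
   g^q - g_0^{q-1} g = prod_{c in F_q} (g - c g_0).  By induction Moore(g) is the
   product of the forms attached to (q^n - 1)/(q - 1) nonzero F_q-combinations
   of the u_j, none of which vanishes since the u_j are F_q-independent. *)

Lemma pchar_natX (R : nzRingType) (p m : nat) :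
  p \in [pchar R] -> [pchar R].-nat (p ^ m)%N.
Proof.
move=> pR; rewrite pnatX (eq_pnat _ (pcharf_eq pR)) pnat_id //.
exact: pcharf_prime pR.
Qed.

Lemma exprBn_pcharX (R : comNzRingType) (p m : nat) (x y : R) :
  p \in [pchar R] -> (x - y) ^+ (p ^ m)%N = x ^+ (p ^ m)%N - y ^+ (p ^ m)%N.
Proof. by move=> pR; rewrite exprDn_pchar ?exprNn_pchar ?pchar_natX. Qed.

Section SubfieldRoots.
Variables (L : fieldType) (q : nat) (s : seq L).
Hypothesis q_gt1 : (1 < q)%N.
Hypothesis prod_s : \prod_(c <- s) ('X - c%:P) = 'X^q - 'X.

Lemma size_XnsubX : size ('X^q - 'X : {poly L}) = q.+1.
Proof. by rewrite size_polyDl ?size_polyXn // size_polyN size_polyX. Qed.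

Lemma size_subfield_roots : size s = q.
Proof. by have := size_prod_XsubC s id; rewrite prod_s size_XnsubX => -[]. Qed.

Lemma subfield_roots_fix c : c \in s -> c ^+ q = c.
Proof.
move=> cs; have : root ('X^q - 'X) c by rewrite -prod_s root_prod_XsubC.
by rewrite rootE !hornerE subr_eq0 => /eqP.
Qed.

End SubfieldRoots.

Lemma exists_subfield_roots (L : finFieldType) (p k n : nat) :
  prime p -> (0 < k)%N -> #|L| = ((p ^ k) ^ n)%N ->
  exists s : seq L, \prod_(c <- s) ('X - c%:P) = 'X^(p ^ k) - 'X.
Proof.
move=> p_pr k_gt0 cardL; set q := (p ^ k)%N.
have pLX : p \in [pchar {poly L}].
  apply: (rmorph_pchar polyC).
  by apply: (@card_finPcharP _ _ (k * n)); rewrite ?expnM.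
have q_gt1 : (1 < q)%N by rewrite -(expn0 p) ltn_exp2l ?prime_gt1.
have dvd_Xq j : ('X^q - 'X : {poly L}) %| 'X^(q ^ j) - 'X.
  elim: j => [|j IHj]; first by rewrite expn0 subrr dvdp0.
  have -> : ('X^(q ^ j.+1) - 'X : {poly L}) =
            ('X^(q ^ j) - 'X) ^+ q + ('X^q - 'X).
    by rewrite /q exprBn_pcharX // -exprM -expnSr addrA subrK.
  by apply: dvdp_add; rewrite ?dvdp_exp ?dvdpp // ltnW.
have := dvd_Xq n; rewrite -cardL finField_genPoly -big_enum /=.
case/dvdp_prod_XsubC => m eq_mask; exists (mask m (enum L)).
apply/esym/eqP; rewrite -eqp_monic ?monic_prod_XsubC //.
by rewrite monicE lead_coefDl ?lead_coefXn // size_polyXn size_polyN size_polyX.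
Qed.

(* [homogenize N P] is a^N P(t/a), computed without dividing by a. *)
Section Homogenization.
Variables (L R : comNzRingType) (f : {rmorphism L -> R}) (t a : R).

Definition homogenize N (P : {poly L}) : R :=
  \sum_(i < N.+1) f P`_i * t ^+ i * a ^+ (N - i).

Lemma homogenizeB N (P Q : {poly L}) :
  homogenize N (P - Q) = homogenize N P - homogenize N Q.
Proof.
rewrite /homogenize -sumrB.
by apply: eq_bigr => i _; rewrite coefB rmorphB !mulrBl.
Qed.

Lemma homogenizeCM N c (P : {poly L}) :
  homogenize N (c%:P * P) = f c * homogenize N P.
Proof.
rewrite /homogenize mulr_sumr.
by apply: eq_bigr => i _; rewrite coefCM rmorphM !mulrA.
Qed.

Lemma homogenizeXM N (P : {poly L}) :
  homogenize N.+1 ('X * P) = t * homogenize N P.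
Proof.
rewrite /homogenize big_ord_recl coefXM rmorph0 !mul0r add0r mulr_sumr.
by apply: eq_bigr => i _; rewrite coefXM /= subSS exprS mulrCA !mulrA.
Qed.

Lemma homogenizeS N (P : {poly L}) :
  (size P <= N.+1)%N -> homogenize N.+1 P = a * homogenize N P.
Proof.
move=> szP; rewrite /homogenize big_ord_recr /= nth_default //.
rewrite rmorph0 !mul0r addr0.
rewrite mulr_sumr; apply: eq_bigr => i _ /=.
by rewrite subSn 1?exprS 1?mulrCA // -ltnS.
Qed.

Lemma homogenizeXn N j :
  (j <= N)%N -> homogenize N 'X^j = t ^+ j * a ^+ (N - j).
Proof.
move=> jN; rewrite /homogenize (bigD1 (Ordinal (jN : (j < N.+1)%N))) //=.
rewrite coefXn eqxx rmorph1 mul1r big1 ?addr0 // => i /eqP ne_ij.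
rewrite coefXn; case: eqP => [eq_ij|]; last by rewrite rmorph0 !mul0r.
by case: ne_ij; apply: val_inj.
Qed.

Lemma homogenize_prod_XsubC (s : seq L) :
  homogenize (size s) (\prod_(c <- s) ('X - c%:P)) =
  \prod_(c <- s) (t - f c * a).
Proof.
elim: s => [|c s IHs].
  by rewrite !big_nil /homogenize big_ord1 coef1 rmorph1 !mul1r.
rewrite !big_cons mulrBl homogenizeB homogenizeXM homogenizeCM.
by rewrite homogenizeS ?IHs ?size_prod_XsubC //; ring.
Qed.

End Homogenization.

Lemma prod_sub_subfield_roots (L : fieldType) (R : comNzRingType)
    (f : {rmorphism L -> R}) (q : nat) (s : seq L) (t a : R) :
  (1 < q)%N -> \prod_(c <- s) ('X - c%:P) = 'X^q - 'X ->
  \prod_(c <- s) (t - f c * a) = t ^+ q - t * a ^+ q.-1.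
Proof.
move=> q_gt1 prod_s.
rewrite -homogenize_prod_XsubC (size_subfield_roots q_gt1 prod_s) prod_s.
rewrite homogenizeB -[X in _ - homogenize _ _ _ _ X]expr1.
by rewrite !homogenizeXn ?(ltnW q_gt1) // subnn mulr1 subn1.
Qed.

Definition moore (R : comNzRingType) (q m : nat) (g : 'I_m -> R) : R :=
  \det (\matrix_(i < m, j < m) g j ^+ (q ^ i)).

Lemma mulmx_subdiag (R : comNzRingType) m n (c : nat -> R)
    (F : nat -> 'I_n -> R) i j :
  (\matrix_(i < m.+1, l < m.+1) ((i == l.+1 :> nat)%:R * c i)
     *m \matrix_(l < m.+1, j < n) F l j) i j =
    if i : nat is i'.+1 then c i * F i' j else 0.
Proof.
rewrite mxE; case: i => [[|i'] lt_i] /=.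
  by apply: big1 => l _; rewrite mxE /= !mul0r.
rewrite (bigD1 (inord i')) //= [X in _ + X]big1 => [|l ne_l]; last first.
  rewrite mxE; case: eqP => [[eq_i]|]; last by rewrite !mul0r.
  by case/eqP: ne_l; apply: val_inj; rewrite /= inordK eq_i // -ltnS -eq_i.
by rewrite !mxE inordK ?eqxx ?mul1r ?addr0 ?mulrA // -ltnS ltnW.
Qed.

Section MooreStep.
Variables (R : comNzRingType) (p k : nat).
Hypothesis pR : p \in [pchar R].
Let q := (p ^ k)%N.

Lemma moore_step m (g : 'I_m.+1 -> R) :
  moore q g = g ord0 *
    moore q (fun j => g (lift ord0 j) ^+ q - g ord0 ^+ q.-1 * g (lift ord0 j)).
Proof.
have q_gt0 : (0 < q)%N by rewrite expn_gt0 prime_gt0 ?(pcharf_prime pR).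
have frobB i (x y : R) : (x - y) ^+ (q ^ i) = x ^+ (q ^ i) - y ^+ (q ^ i).
  by rewrite /q -expnM exprBn_pcharX.
pose c i := g ord0 ^+ (q.-1 * q ^ i.-1).
pose S := \matrix_(i < m.+1, l < m.+1) ((i == l.+1 :> nat)%:R * c i).
rewrite {1}/moore; set V := \matrix_(i < m.+1, j < m.+1) _.
have det1S : \det (1%:M - S) = 1.
  rewrite det_trig; last first.
    apply/forallP => i; apply/forallP => j; apply/implyP => lt_ij.
    have /negPf ne_ij : i != j by rewrite neq_ltn lt_ij.
    by rewrite !mxE ne_ij ltn_eqF ?mul0r ?subr0 // leqW.
  by apply: big1 => i _; rewrite !mxE eqxx ltn_eqF ?mul0r ?subr0.
have reduced : (1%:M - S) *m V = \matrix_(i, j)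
    (if i : nat is i'.+1 then (g j ^+ q - g ord0 ^+ q.-1 * g j) ^+ (q ^ i')
     else g j).
  apply/matrixP => i j; rewrite mulmxBl mul1mx [LHS]mxE [(- (S *m V)) _ _]mxE.
  rewrite (mulmx_subdiag c (fun i j => g j ^+ (q ^ i))) !mxE.
  case: i => [[|i] lt_i] /=; first by rewrite subr0 expr1.
  by rewrite frobB exprMn -!exprM expnS.
rewrite -[\det V]mul1r -det1S -det_mulmx reduced (expand_det_col _ ord0).
rewrite big_ord_recl big1 ?addr0 => [|i _]; last first.
  rewrite mxE lift0 -exprSr prednK // subrr expr0n.
  by rewrite eqn0Ngt expn_gt0 q_gt0 mul0r.
rewrite mxE /cofactor /= expr0 mul1r; congr (_ * \det _).
by apply/matrixP => i j; rewrite !mxE lift0.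
Qed.

End MooreStep.

Section FqCombinations.
Variables (L : fieldType) (V : lmodType L) (q : nat).

Definition nonzero_Fq_comb m (w : 'I_m -> V) (v : V) :=
  exists a : 'I_m -> L,
    [/\ forall j, a j ^+ q = a j, exists j, a j != 0 & v = \sum_j a j *: w j].

Lemma nonzero_Fq_comb_head m (w : 'I_m.+1 -> V) :
  (0 < q)%N -> nonzero_Fq_comb w (w ord0).
Proof.
move=> q_gt0; exists (fun j => (j == ord0)%:R); split.
- by move=> j; case: eqP; rewrite ?expr1n ?expr0n // eqn0Ngt q_gt0.
- by exists ord0; rewrite eqxx oner_neq0.
rewrite (bigD1 ord0) //= scale1r big1 ?addr0 // => j /negbTE->.
exact: scale0r.
Qed.

Lemma nonzero_Fq_comb_cons m (w : 'I_m.+1 -> V) v c :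
  c ^+ q = c -> nonzero_Fq_comb (fun j => w (lift ord0 j)) v ->
  nonzero_Fq_comb w (v + c *: w ord0).
Proof.
move=> Fq_c [a [Fq_a [j0 a_j0] ->]].
exists (fun j => if unlift ord0 j is Some j' then a j' else c); split.
- by move=> j; case: unliftP.
- by exists (lift ord0 j0); rewrite liftK.
rewrite big_ord_recl unlift_none addrC; congr (_ + _).
by apply: eq_bigr => j _; rewrite liftK.
Qed.

Definition Fq_semilinear (R : comNzRingType) (f : L -> R) (phi : V -> R) :=
  {morph phi : v w / v + w} /\
  forall c v, c ^+ q = c -> phi (c *: v) = f c * phi v.

End FqCombinations.

Section MooreFactorization.
Variables (L : fieldType) (R : comNzRingType) (f : {rmorphism L -> R}).
Variables (p k : nat) (V : lmodType L) (Fq : seq L).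
Hypotheses (pL : p \in [pchar L]) (pR : p \in [pchar R]).
Let q := (p ^ k)%N.
Hypothesis q_gt1 : (1 < q)%N.
Hypothesis prod_Fq : \prod_(c <- Fq) ('X - c%:P) = 'X^q - 'X.

Lemma moore_factorization m (phi : V -> R) (w : 'I_m -> V) :
  Fq_semilinear q f phi ->
  exists s : seq V, [/\ size s = (\sum_(i < m) q ^ i)%N,
    forall v, v \in s -> nonzero_Fq_comb q w v &
    moore q (fun j => phi (w j)) = \prod_(v <- s) phi v].
Proof.
elim: m => [|m IHm] in phi w * => -[phiD phiZ].
  by exists [::]; rewrite big_ord0 big_nil /moore det_mx00.
pose w0 := w ord0.
pose psi v := phi v ^+ q - phi w0 ^+ q.-1 * phi v.
have psi_semilinear : Fq_semilinear q f psi.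
  split=> [v v'|c v Fq_c]; rewrite /psi ?phiD ?(phiZ _ _ Fq_c).
    by rewrite exprDn_pchar ?pchar_natX //; ring.
  by rewrite exprMn -rmorphXn Fq_c; ring.
have [s [size_s comb_s moore_psi]] :=
  IHm psi (fun j => w (lift ord0 j)) psi_semilinear.
have FqN c : c \in Fq -> (- c) ^+ q = - c.
  move=> Fq_c; rewrite exprNn_pchar ?pchar_natX //.
  by rewrite (subfield_roots_fix prod_Fq Fq_c).
exists (w0 :: [seq v + (- c) *: w0 | v <- s, c <- Fq]); split.
- rewrite /= size_allpairs size_s (size_subfield_roots q_gt1 prod_Fq).
  rewrite big_ord_recl add1n big_distrl; congr _.+1.
  by apply: eq_bigr => i _; rewrite expnSr.
- move=> v; rewrite inE => /predU1P [->|/allpairsP [[v' c] [s_v' Fq_c ->]]].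
    exact/nonzero_Fq_comb_head/ltnW.
  exact: nonzero_Fq_comb_cons (FqN c Fq_c) (comb_s v' s_v').
rewrite big_cons (moore_step _ pR) big_allpairs_dep moore_psi; congr (_ * _).
apply: eq_bigr => v _.
transitivity (\prod_(c <- Fq) (phi v - f c * phi w0)).
  by rewrite (prod_sub_subfield_roots f _ _ q_gt1 prod_Fq) mulrC.
by apply: eq_big_seq => c Fq_c; rewrite phiD phiZ ?FqN // rmorphN mulNr.
Qed.

End MooreFactorization.

Lemma Fq_independent_comb_neq0 (L : fieldType) q n (u : 'I_n -> L * L)
    (v : L^o * L^o) :
  Fq_independent q u -> nonzero_Fq_comb q (u : 'I_n -> L^o * L^o) v -> v != 0.
Proof.
move=> indep [a [Fq_a [j a_j] ->]]; apply: contra a_j => /eqP comb0.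
apply/eqP; apply: indep Fq_a _ _ j.
  by have := congr1 fst comb0; rewrite raddf_sum.
by have := congr1 snd comb0; rewrite raddf_sum.
Qed.

Lemma det_block_mx_comm (R : idomainType) n (A B C D : 'M[R]_n) :
  C *m D = D *m C -> \det D != 0 ->
  \det (block_mx A B C D) = \det (A *m D - B *m C).
Proof.
move=> CD_comm detD_neq0; apply: (mulIf detD_neq0).
have -> : \det D = \det (block_mx D 0 (- C) 1%:M).
  by rewrite det_lblock det1 mulr1.
rewrite -det_mulmx mulmx_block !mulmx0 !mulmx1 !mulmxN CD_comm subrr !add0r.
by rewrite det_ublock det_lblock det1 mulr1.
Qed.

Lemma mpolyX_neq0 (R : nzRingType) n (i : 'I_n) : ('X_i : {mpoly R[n]}) != 0.
Proof.
apply/eqP => Xi0; have := mcoeffXU R i i.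
by rewrite Xi0 mcoeff0 eqxx => /esym/eqP; rewrite oner_eq0.
Qed.

Fact even_col_subproof n (i : 'I_n) : (i.*2 < n + n)%N.
Proof. by rewrite addnn ltn_double. Qed.

Fact odd_col_subproof n (i : 'I_n) : (i.*2.+1 < n + n)%N.
Proof. by rewrite addnn ltn_Sdouble. Qed.

Definition even_col n (i : 'I_n) := Ordinal (even_col_subproof i).
Definition odd_col n (i : 'I_n) := Ordinal (odd_col_subproof i).

Definition interleave_fun n (c : 'I_(n + n)) :=
  match split c with inl i => even_col i | inr i => odd_col i end.

Lemma interleave_inj n : injective (@interleave_fun n).
Proof.
move=> c1 c2; rewrite /interleave_fun.
by case: splitP => i1 eq1; case: splitP => i2 eq2 /(congr1 val) /= eq12;
  apply: ord_inj; rewrite eq1 eq2; lia.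
Qed.

Definition interleave n : 'S_(n + n) := perm (@interleave_inj n).

Definition linear_form (L : fieldType) (w : L * L) : {mpoly L[2]} :=
  w.1%:MP * 'X_1 - w.2%:MP * 'X_0.

Section DetpolyMoore.
Variables (L : fieldType) (p k n : nat) (u : 'I_n -> L * L).
Hypothesis pL : p \in [pchar L].
Let q := (p ^ k)%N.
Local Notation R := {mpoly L[2]}.

Definition detpoly_mx : 'M[R]_(n + n) :=
  \matrix_(r < n + n, c < n + n)
    (let i := (c %/ 2)%N in
     let e := (c %% 2)%N in
     match split r with
     | inl k => ((if e == 0%N then (u k).1 else (u k).2) ^+ (q ^ i))%:MP
     | inr k => if i == val k then ('X_(inord e) : R) ^+ (q ^ i) else 0
     end).

Lemma detpolyE : detpoly q u = \det detpoly_mx.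
Proof. by []. Qed.

Lemma col_perm_detpoly_mx :
  col_perm (interleave n) detpoly_mx =
  block_mx (\matrix_(j, i) ((u j).1 ^+ (q ^ i))%:MP)
           (\matrix_(j, i) ((u j).2 ^+ (q ^ i))%:MP)
           (diag_mx (\row_i 'X_0 ^+ (q ^ i))) (diag_mx (\row_i 'X_1 ^+ (q ^ i))).
Proof.
have inord0 : inord 0 = 0 :> 'I_2 by apply: val_inj; rewrite /= inordK.
have inord1 : inord 1 = 1 :> 'I_2 by apply: val_inj; rewrite /= inordK.
apply/matrixP => r c; rewrite mxE permE /interleave_fun -[r]splitK -[c]splitK.
case: (split r) => j; case: (split c) => i; rewrite !unsplitK mxE unsplitK /=.
- by rewrite block_mxEul mxE divn2 modn2 odd_double doubleK.
- by rewrite block_mxEur mxE divn2 modn2 /= odd_double uphalf_double.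
- rewrite block_mxEdl !mxE divn2 modn2 odd_double doubleK inord0 mulrb.
  have [->|ne_ij] := eqVneq i j; first by rewrite !eqxx.
  by rewrite !ifN // eq_sym.
- rewrite block_mxEdr !mxE divn2 modn2 /= odd_double uphalf_double inord1 mulrb.
  have [->|ne_ij] := eqVneq i j; first by rewrite !eqxx.
  by rewrite !ifN // eq_sym.
Qed.

Lemma detpoly_moore :
  detpoly q u = (-1) ^+ interleave n * moore q (fun j => linear_form (u j)).
Proof.
have pR : p \in [pchar R] by apply: (rmorph_pchar (@mpolyC 2 L)).
have detX_neq0 (l : 'I_2) :
    \det (diag_mx (\row_(i < n) 'X_l ^+ (q ^ i))) != 0 :> R.
  rewrite det_diag; apply/prodf_neq0 => i _.
  by rewrite mxE expf_neq0 ?mpolyX_neq0.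
have := congr1 determinant col_perm_detpoly_mx.
rewrite col_permE det_mulmx det_perm odd_permV.
rewrite det_block_mx_comm ?detX_neq0 //; last first.
  by rewrite !mulmx_diag; congr diag_mx; apply/rowP => i; rewrite !mxE mulrC.
move=> detE; rewrite detpolyE; apply: (canRL (signrMK _)); rewrite mulrC detE.
rewrite /moore -det_tr; congr (\det _); apply/matrixP => j i.
rewrite !mul_mx_diag !mxE /linear_form /q -expnM exprBn_pcharX //.
by rewrite !exprMn !rmorphXn.
Qed.

End DetpolyMoore.

Theorem mainTheorem3 (L : finFieldType) (p k n : nat) (u : 'I_n -> L * L) :
  prime p -> (0 < k)%N -> (2 <= n)%N ->
  #|L| = ((p ^ k) ^ n)%N ->
  Fq_independent (p ^ k) u ->
  exists (c : L) (s : seq (L * L)),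
    [/\ c != 0,
        size s = (\sum_(i < n) (p ^ k) ^ i)%N,
        all (fun ab => ab != (0, 0)) s &
        detpoly (p ^ k) u =
          c%:MP * \prod_(ab <- s) (ab.2%:MP * 'X_0 - ab.1%:MP * 'X_1)].
Proof.
move=> p_pr k_gt0 _ cardL indep.
have pL : p \in [pchar L].
  by apply: (@card_finPcharP _ _ (k * n)); rewrite ?expnM.
have pR : p \in [pchar {mpoly L[2]}] by apply: (rmorph_pchar (@mpolyC 2 L)).
have q_gt1 : (1 < p ^ k)%N by rewrite -(expn0 p) ltn_exp2l ?prime_gt1.
have [Fq prod_Fq] := exists_subfield_roots p_pr k_gt0 cardL.
have linear_form_semilinear :
    Fq_semilinear (p ^ k) (@mpolyC 2 L)
      (@linear_form L : L^o * L^o -> {mpoly L[2]}).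
  by split=> [v w | c v _]; rewrite /linear_form ?rmorphD ?rmorphM /=; ring.
have [s [size_s comb_s moore_s]] :=
  moore_factorization pL pR q_gt1 prod_Fq (u : 'I_n -> L^o * L^o)
    linear_form_semilinear.
exists ((-1) ^+ interleave n), [seq - v | v <- s]; split.
- by rewrite signr_eq0.
- by rewrite size_map size_s.
- apply/allP => _ /mapP [v s_v ->]; rewrite oppr_eq0.
  exact: Fq_independent_comb_neq0 indep (comb_s v s_v).
rewrite (detpoly_moore k u pL) moore_s rmorph_sign big_map; congr (_ * _).
by apply: eq_bigr => v _; rewrite /linear_form !rmorphN !mulNr opprK addrC.
Qed.
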